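(* Let $P\subseteq[0,k]^n$ be a lattice polytope, let $\sigma:[n]\to\pm[n]$ be a signed permutation, let $\alpha\ge 2k+1$ and $\mathbf{x}_\sigma=(\operatorname{sign}(\sigma(1))\alpha^{|\sigma(1)|},\dots,\operatorname{sign}(\sigma(n))\alpha^{|\sigma(n)|})$. Define a flag of faces $G_n\supseteq G_{n-1}\supseteq\dots\supseteq G_0$ by $G_n=P$ and, for $i=n,\dots,1$, $G_{i-1}$ is the face of $G_i$ on which $\mathbf{e}_{\sigma^{-1}(i)}^{\intercal}\mathbf{x}$ is maximized. Then $G_0$ is a single vertex, and it is the unique vertex of $P$ maximizing $\mathbf{x}_\sigma^{\intercal}\mathbf{x}$.
   Context: A signed permutation $\sigma:[n]\to\pm[n]$ is a map such that $i\mapsto|\sigma(i)|$ is a permutation of $[n]$. For $j\in[n]$, $\sigma^{-1}(j)$ denotes the signed index $\operatorname{sign}(\sigma(i))\,i$ where $|\sigma(i)|=j$, and $\mathbf{e}_{-i}:=-\mathbf{e}_i$, with $\mathbf{e}_i$ the standard basis vectors. A lattice polytope has integer vertices. *)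

From HB Require Import structures.
From mathcomp Require Import all_boot all_order all_algebra.
Set Implicit Arguments. Unset Strict Implicit. Unset Printing Implicit Defensive.
Import Order.TTheory GRing.Theory Num.Theory.
Local Open Scope ring_scope.

Section Defs.
Variables (R : realFieldType) (n : nat).

Definition dotv (c x : 'rV[R]_n) : R := \sum_(i < n) c 0 i * x 0 i.

Definition conv (V : seq 'rV[R]_n) : 'rV[R]_n -> Prop :=
  fun x => exists lam : 'I_(size V) -> R,
    [/\ forall j, 0 <= lam j, \sum_j lam j = 1 & x = \sum_j lam j *: V`_j].

Definition lattice_point (v : 'rV[R]_n) : Prop :=
  forall i, exists z : int, v 0 i = z%:~R.

Definition face_max (c : 'rV[R]_n) (S : 'rV[R]_n -> Prop) : 'rV[R]_n -> Prop :=
  fun x => S x /\ forall y, S y -> dotv c y <= dotv c x.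

Definition is_vertex (S : 'rV[R]_n -> Prop) (v : 'rV[R]_n) : Prop :=
  S v /\ forall x y (t : R), S x -> S y -> 0 < t < 1 ->
    v = t *: x + (1 - t) *: y -> x = y.

(* signed permutation sigma : [n] -> ±[n], with [n] indexed by 'I_n (0-based
   domain) and values in int (1-based, signed). *)
Definition signed_perm (sigma : 'I_n -> int) : Prop :=
  (forall i, (1 <= `|sigma i| <= n)%N) /\ injective (fun i => `|sigma i|%N).

(* e_{sigma^{-1}(j)} = sign(sigma i) e_i where |sigma i| = j *)
Definition e_sinv (sigma : 'I_n -> int) (j : nat) : 'rV[R]_n :=
  \row_i (if `|sigma i|%N == j then (Num.sg (sigma i))%:~R else 0).

Definition x_sigma (sigma : 'I_n -> int) (alpha : R) : 'rV[R]_n :=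
  \row_i ((Num.sg (sigma i))%:~R * alpha ^+ `|sigma i|%N).

(* flag_step P sigma t = G_{n-t}: G_n = P, G_{i-1} = face of G_i maximizing
   e_{sigma^{-1}(i)}^T x *)
Fixpoint flag_step (P : 'rV[R]_n -> Prop) (sigma : 'I_n -> int) (t : nat)
  : 'rV[R]_n -> Prop :=
  match t with
  | O => P
  | t'.+1 => face_max (e_sinv sigma (n - t')) (flag_step P sigma t')
  end.

Definition flagG P sigma (i : nat) := flag_step P sigma (n - i).

End Defs.

From HB Require Import structures.
From mathcomp Require Import all_boot all_order all_algebra.
From mathcomp Require Import zify ring lra.
Import Order.TTheory GRing.Theory Num.Theory.
Local Open Scope ring_scope.
Set Implicit Arguments. Unset Strict Implicit. Unset Printing Implicit Defensive.

(* Write f x = x_sigma^T x = \sum_i s_i alpha^(a_i) x_i with a_i = |sigma i| and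
   s_i = sign (sigma i).  On lattice points of [0, k]^n, f compares points
   lexicographically: if u and w agree on every coordinate with a_i > a_i0 and
   s_i0 (u_i0 - w_i0) > 0, that coordinate contributes at least alpha^(a_i0) to
   f u - f w and all lower ones together at least
   -k (alpha^(a_i0) - 1) / (alpha - 1) > -alpha^(a_i0), as soon as alpha >= k + 1.
   So f is injective on the generators of P, and its maximiser v among them is
   the unique maximiser over P, hence a vertex.  Maximising
   e_{sigma^-1(n)}, e_{sigma^-1(n-1)}, ... in turn performs the same comparison
   one coordinate at a time: G_{n-t} is the hull of the generators agreeing with
   v on the coordinates i with a_i > n - t, and G_0 = {v}. *)

Section ConvexHull.
Variables (R : realFieldType) (n : nat).
Implicit Types (c x y : 'rV[R]_n) (S : 'rV[R]_n -> Prop).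

Lemma dotvD c x y : dotv c (x + y) = dotv c x + dotv c y.
Proof.
by rewrite /dotv -big_split; apply: eq_bigr => i _; rewrite mxE mulrDr.
Qed.

Lemma dotvB c x y : dotv c (x - y) = dotv c x - dotv c y.
Proof. by rewrite /dotv -sumrB; apply: eq_bigr => i _; rewrite !mxE mulrBr. Qed.

Lemma dotvZ c x (t : R) : dotv c (t *: x) = t * dotv c x.
Proof. by rewrite /dotv mulr_sumr; apply: eq_bigr => i _; rewrite mxE mulrCA. Qed.

Lemma dotv_sum (I : finType) c (F : I -> 'rV[R]_n) :
  dotv c (\sum_i F i) = \sum_i dotv c (F i).
Proof.
apply: (big_morph (dotv c) (dotvD c)).
by rewrite /dotv big1 // => i _; rewrite mxE mulr0.
Qed.

Lemma face_max_iff c S S' :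
  (forall x, S x <-> S' x) -> forall x, face_max c S x <-> face_max c S' x.
Proof.
move=> SS' x; split=> -[Sx x_max]; split=> [|y /SS' /x_max] //; exact/SS'.
Qed.

Lemma is_vertex_of_unique_max c S v :
  S v -> (forall y, S y -> dotv c y <= dotv c v) ->
  (forall y, S y -> dotv c v <= dotv c y -> y = v) -> is_vertex S v.
Proof.
move=> Sv v_max v_uniq; split=> // x y t Sx Sy /andP[t_gt0 t_lt1] vE.
have gap0 : t * (dotv c v - dotv c x) + (1 - t) * (dotv c v - dotv c y) = 0.
  by rewrite vE dotvD !dotvZ; ring.
have t1_gt0 : 0 < 1 - t by rewrite subr_gt0.
move/eqP: gap0; rewrite paddr_eq0 ?mulr_ge0 ?subr_ge0 ?v_max ?ltW //.
rewrite !mulf_eq0 (gt_eqF t_gt0) (gt_eqF t1_gt0) !subr_eq0 /=.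
rewrite !eq_le => /andP[/andP[fx _] /andP[fy _]].
by rewrite (v_uniq x Sx fx) (v_uniq y Sy fy).
Qed.

(* The hull of the points of [V] satisfying [Q]; restricting the support of the
   weights rather than filtering [V] keeps every face of [conv V] indexed by [V]. *)
Definition conv_in (V : seq 'rV[R]_n) (Q : 'rV[R]_n -> Prop) x : Prop :=
  exists lam : 'I_(size V) -> R,
    [/\ forall j, 0 <= lam j, \sum_j lam j = 1, x = \sum_j lam j *: V`_j
      & forall j, lam j != 0 -> Q V`_j].

Variable V : seq 'rV[R]_n.
Implicit Types (Q : 'rV[R]_n -> Prop).

Lemma conv_in_mem Q v : v \in V -> Q v -> conv_in V Q v.
Proof.
move=> vV Qv; have v_idx : (index v V < size V)%N by rewrite index_mem.
pose j0 := Ordinal v_idx.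
exists (fun j => (j == j0)%:R); split=> [j|||j].
- by rewrite ler0n.
- by rewrite (bigD1 j0) //= eqxx big1 ?addr0 // => j /negbTE->.
- rewrite (bigD1 j0) //= eqxx scale1r big1 ?addr0 ?nth_index // => j /negbTE->.
  exact: scale0r.
- by case: (eqVneq j j0) => [-> _|]; rewrite ?nth_index ?eqxx.
Qed.

Lemma conv_in_True x : conv V x <-> conv_in V (fun=> True) x.
Proof. by split=> -[lam [? ? ?]]; exists lam. Qed.

Lemma conv_in_sub Q Q' x :
  (forall u, Q u -> Q' u) -> conv_in V Q x -> conv_in V Q' x.
Proof.
by move=> QQ' [lam [? ? ? suppQ]]; exists lam; split=> // j /suppQ /QQ'.
Qed.

Lemma conv_in_eq Q Q' x :
  (forall u, Q u <-> Q' u) -> conv_in V Q x <-> conv_in V Q' x.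
Proof. by move=> QQ'; split; apply: conv_in_sub => u /QQ'. Qed.

Lemma conv_in_single Q v x :
  (forall u, u \in V -> Q u -> u = v) -> conv_in V Q x -> x = v.
Proof.
move=> Q_v [lam [_ lam1 -> suppQ]].
rewrite (eq_bigr (fun j => lam j *: v)) => [|j _].
  by rewrite -scaler_suml lam1 scale1r.
have [->|/suppQ Qj] := eqVneq (lam j) 0; first by rewrite !scale0r.
by rewrite (Q_v _ (mem_nth 0 (ltn_ord j)) Qj).
Qed.

Lemma dotv_comb c (lam : 'I_(size V) -> R) :
  dotv c (\sum_j lam j *: V`_j) = \sum_j lam j * dotv c V`_j.
Proof. by rewrite dotv_sum; apply: eq_bigr => j _; rewrite dotvZ. Qed.

Lemma conv_in_dotv_le Q c (m : R) x :
  (forall u, u \in V -> Q u -> dotv c u <= m) -> conv_in V Q x -> dotv c x <= m.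
Proof.
move=> le_m [lam [lam_ge0 lam1 -> suppQ]].
rewrite dotv_comb -[leRHS]mul1r -lam1 mulr_suml; apply: ler_sum => j _.
have [->|/suppQ Qj] := eqVneq (lam j) 0; first by rewrite !mul0r.
by rewrite ler_wpM2l // le_m // mem_nth.
Qed.

Lemma conv_in_dotv_eq Q c (m : R) x :
  (forall u, u \in V -> Q u -> dotv c u = m) -> conv_in V Q x -> dotv c x = m.
Proof.
move=> eq_m [lam [_ lam1 -> suppQ]].
rewrite dotv_comb -[RHS]mul1r -lam1 mulr_suml; apply: eq_bigr => j _.
have [->|/suppQ Qj] := eqVneq (lam j) 0; first by rewrite !mul0r.
by rewrite eq_m // mem_nth.
Qed.

Lemma conv_dotv_le c v y :
  (forall u, u \in V -> dotv c u <= dotv c v) -> conv V y -> dotv c y <= dotv c v.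
Proof.
by move=> v_max /conv_in_True; apply: conv_in_dotv_le => u uV _; apply: v_max.
Qed.

Lemma face_max_conv_in Q c v :
  v \in V -> Q v -> (forall u, u \in V -> Q u -> dotv c u <= dotv c v) ->
  forall x, face_max c (conv_in V Q) x <->
            conv_in V (fun u => Q u /\ dotv c u = dotv c v) x.
Proof.
move=> vV Qv v_max x; split=> [[[lam [lam_ge0 lam1 xE suppQ]] x_max]|x_in].
  have gap_ge0 j : 0 <= lam j * (dotv c v - dotv c V`_j).
    have [->|/suppQ Qj] := eqVneq (lam j) 0; first by rewrite mul0r.
    by rewrite mulr_ge0 // subr_ge0 v_max // mem_nth.
  have gap0 : \sum_j lam j * (dotv c v - dotv c V`_j) = 0.
    apply/eqP; rewrite eq_le sumr_ge0 // andbT.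
    under eq_bigr do rewrite mulrBr.
    rewrite sumrB -mulr_suml lam1 mul1r -dotv_comb -xE subr_le0.
    exact/x_max/conv_in_mem.
  exists lam; split=> // j lam_j; split; first exact: suppQ.
  have /eqP := @psumr_eq0P _ _ xpredT _ (fun i _ => gap_ge0 i) gap0 j isT.
  by rewrite mulf_eq0 (negbTE lam_j) subr_eq0 => /eqP.
split=> [|y y_in]; first by apply: conv_in_sub x_in => u [].
rewrite (conv_in_dotv_eq (m := dotv c v) _ x_in) => [|u _ [] //].
exact: conv_in_dotv_le v_max y_in.
Qed.

End ConvexHull.

Lemma exists_argmax (R : realDomainType) (T : eqType) (s : seq T) (g : T -> R) :
  s != [::] -> exists2 v, v \in s & forall u, u \in s -> g u <= g v.
Proof.
elim: s => // x s IH _; have [->|/IH[w ws w_max]] := eqVneq s [::].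
  by exists x => [|u]; rewrite ?mem_seq1 // => /eqP->.
have [gxw|gwx] := leP (g x) (g w).
  by exists w => [|u]; rewrite inE ?ws ?orbT // => /orP[/eqP->|/w_max].
exists x => [|u]; rewrite inE ?eqxx // => /orP[/eqP->//|/w_max/le_trans]; apply.
exact: ltW.
Qed.

Section InjectiveWeights.
Variables (R : realFieldType) (I : finType) (a : I -> nat).
Hypothesis a_inj : injective a.

Lemma sum_inj_lt_le (F : nat -> R) (A : nat) :
  (forall e, 0 <= F e) -> \sum_(i | (a i < A)%N) F (a i) <= \sum_(e < A) F e.
Proof.
move=> F_ge0; elim: A => [|A IH]; first by rewrite big_ord0 big_pred0.
rewrite big_ord_recr (bigID (fun i => a i < A)%N) /=; apply: lerD.
  by rewrite (eq_bigl (fun i => a i < A)%N) // => i; apply/andb_idl/ltnW.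
case: (pickP (fun i => a i == A)) => [i1 /eqP ai1|no_i].
  rewrite (big_pred1 i1) ?ai1 // => i.
  by rewrite ltnS -leqNgt -eqn_leq -ai1 (inj_eq a_inj).
rewrite big_pred0 // => i; rewrite ltnS -leqNgt -eqn_leq; exact: no_i.
Qed.

Lemma lex_sum_gt0 (k : nat) (alpha : R) (D : I -> R) (i0 : I) :
  k%:R + 1 <= alpha -> alpha ^+ a i0 <= D i0 ->
  (forall i, (a i0 < a i)%N -> D i = 0) ->
  (forall i, (a i < a i0)%N -> - (k%:R * alpha ^+ a i) <= D i) ->
  0 < \sum_i D i.
Proof.
move=> alpha_ge top_ge high0 low_ge; set A := a i0.
have alpha_ge0 : 0 <= alpha by apply: le_trans alpha_ge; rewrite addr_ge0.
have high : \sum_(i | ~~ (a i < A)%N) D i = D i0.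
  rewrite (bigD1 i0) /= ?ltnn // big1 ?addr0 // => i /andP[].
  rewrite -leqNgt leq_eqVlt => /orP[/eqP/a_inj->|/high0//]; by rewrite eqxx.
set S := \sum_(e < A) alpha ^+ e.
have low : - (k%:R * S) <= \sum_(i | (a i < A)%N) D i.
  apply: le_trans (ler_sum _ low_ge); rewrite sumrN -mulr_sumr lerN2.
  by rewrite ler_wpM2l // sum_inj_lt_le // => e; rewrite exprn_ge0.
have S_ge0 : 0 <= S by rewrite sumr_ge0 // => e _; rewrite exprn_ge0.
have kS : k%:R * S <= (alpha - 1) * S by rewrite ler_wpM2r // lerBrDr.
have geom : (alpha - 1) * S = alpha ^+ A - 1 by rewrite subrX1.
rewrite (bigID (fun i => a i < A)%N) /= high; lra.
Qed.

End InjectiveWeights.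

Definition in_box (R : realFieldType) (n k : nat) (x : 'rV[R]_n) : Prop :=
  forall i, 0 <= x 0 i <= k%:R.

Section LexicographicObjective.
Variables (R : realFieldType) (n k : nat) (sigma : 'I_n -> int) (alpha : R).
Hypothesis sigma_perm : signed_perm sigma.
Hypothesis alpha_ge : k%:R + 1 <= alpha.

Local Notation a i := (`|sigma i|%N).
Local Notation s i := ((Num.sg (sigma i))%:~R : R).
Local Notation f x := (dotv (x_sigma sigma alpha) x).
Local Notation lattice_box x := (lattice_point x /\ in_box k x).

Lemma abs_sigma_inj : injective (fun i => a i).
Proof. by case: sigma_perm. Qed.

Lemma abs_sigma_bounds i : (1 <= a i <= n)%N.
Proof. by case: sigma_perm. Qed.

Lemma alpha_ge0 : 0 <= alpha.
Proof. by apply: le_trans alpha_ge; rewrite addr_ge0. Qed.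

Lemma sg_sigma_pm1 i : s i = 1 \/ s i = -1.
Proof.
have : sigma i != 0 by apply: contraTneq (abs_sigma_bounds i) => ->.
by rewrite neq_lt => /orP[/ltr0_sg|/gtr0_sg]->; [right|left].
Qed.

Lemma x_sigma_lt_lex u w i0 : lattice_box u -> lattice_box w ->
  (forall i, (a i0 < a i)%N -> u 0 i = w 0 i) ->
  0 < s i0 * (u 0 i0 - w 0 i0) -> f w < f u.
Proof.
move=> [u_lat u_box] [w_lat w_box] agree lead_gt0.
rewrite -subr_gt0 -dotvB; apply: (lex_sum_gt0 abs_sigma_inj alpha_ge (i0 := i0)).
- have [zu zuE] := u_lat i0; have [zw zwE] := w_lat i0.
  move: lead_gt0; rewrite !mxE zuE zwE -intrB -intrM ltr0z => lead_gt0.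
  rewrite mulrAC -intrM -[leLHS]mul1r ler_wpM2r ?exprn_ge0 ?ler1z //.
  by rewrite alpha_ge0.
- by move=> i /agree; rewrite !mxE => ->; rewrite subrr mulr0.
- move=> i _; rewrite !mxE; have := u_box i; have := w_box i.
  have : 0 <= alpha ^+ a i by rewrite exprn_ge0 // alpha_ge0.
  case: (sg_sigma_pm1 i) => -> ai_ge0 /andP[w1 w2] /andP[u1 u2].
    by rewrite mul1r -mulNr [leLHS]mulrC ler_wpM2l //; lra.
  by rewrite mulN1r mulNr lerN2 [leRHS]mulrC ler_wpM2l //; lra.
Qed.

Lemma x_sigma_inj u w : lattice_box u -> lattice_box w -> f u = f w -> u = w.
Proof.
move=> u_lb w_lb fuw.
case: (pickP (fun i => u 0 i != w 0 i)) => [i1 ne1|eq_all]; last first.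
  by apply/rowP => i; apply/eqP/negbFE/eq_all.
case: (@arg_maxnP _ i1 (fun i => u 0 i != w 0 i) (fun i => a i) ne1)
  => i0 ne0 i0_max.
have agree i : (a i0 < a i)%N -> u 0 i = w 0 i.
  by move=> lt; apply/eqP; apply: contraTT lt => /i0_max; rewrite -leqNgt.
have : s i0 * (u 0 i0 - w 0 i0) != 0.
  rewrite mulf_neq0 ?subr_eq0 //.
  by case: (sg_sigma_pm1 i0) => ->; rewrite ?oppr_eq0 oner_eq0.
rewrite neq_lt => /orP[lead_lt0|lead_gt0].
  have lead_gt0 : 0 < s i0 * (w 0 i0 - u 0 i0) by rewrite -opprB mulrN oppr_gt0.
  have := x_sigma_lt_lex w_lb u_lb (fun i lt => esym (agree i lt)) lead_gt0.
  by rewrite fuw ltxx.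
by have := x_sigma_lt_lex u_lb w_lb agree lead_gt0; rewrite fuw ltxx.
Qed.

Definition agree_above (v : 'rV[R]_n) (j : nat) (u : 'rV[R]_n) : Prop :=
  forall i, (j < a i)%N -> u 0 i = v 0 i.

Lemma dotv_e_sinv j i1 x : a i1 = j -> dotv (e_sinv R sigma j) x = s i1 * x 0 i1.
Proof.
move=> ai1; rewrite /dotv (bigD1 i1) //= big1 ?addr0 => [|i ne].
  by rewrite mxE ai1 eqxx.
rewrite mxE.
case: eqP => [ai|_]; last by rewrite mul0r.
by move: ne; rewrite (abs_sigma_inj (etrans ai (esym ai1))) eqxx.
Qed.

Lemma dotv_e_sinv_out j x : (forall i, a i != j) -> dotv (e_sinv R sigma j) x = 0.
Proof.
by move=> no_j; rewrite /dotv big1 // => i _; rewrite mxE (negbTE (no_j i)) mul0r.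
Qed.

Lemma agree_above_pred v u j :
  agree_above v j.-1 u <->
  agree_above v j u /\ dotv (e_sinv R sigma j) u = dotv (e_sinv R sigma j) v.
Proof.
case: (pickP (fun i => a i == j)) => [i1 /eqP ai1|no_j]; last first.
  rewrite !dotv_e_sinv_out => [|i|i]; rewrite ?no_j //.
  split=> [agree|[agree _] i lt]; first by split=> // i lt; apply: agree; lia.
  by apply: agree; move/negbT/eqP: (no_j i); lia.
rewrite !(dotv_e_sinv _ ai1); split=> [agree|[agree e] i lt].
  split=> [i lt|]; first by apply: agree; lia.
  by rewrite agree // ai1; have := abs_sigma_bounds i1; lia.
have [gt|eq] : (j < a i)%N \/ a i = j by lia.
  exact: agree.
rewrite (abs_sigma_inj (etrans eq (esym ai1))).
by case: (sg_sigma_pm1 i1) e => ->; rewrite ?mul1r ?mulN1r // => /oppr_inj.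
Qed.

Section Flag.
Variables (V : seq 'rV[R]_n) (v : 'rV[R]_n).
Hypothesis V_lattice_box : forall u, u \in V -> lattice_box u.
Hypothesis vV : v \in V.
Hypothesis v_max : forall u, u \in V -> f u <= f v.

Lemma e_sinv_le_max j u : u \in V -> agree_above v j u ->
  dotv (e_sinv R sigma j) u <= dotv (e_sinv R sigma j) v.
Proof.
move=> uV agree.
case: (pickP (fun i => a i == j)) => [i1 /eqP ai1|no_j]; last first.
  by rewrite !dotv_e_sinv_out // => i; rewrite no_j.
rewrite !(dotv_e_sinv _ ai1) leNgt; apply/negP => lead_lt.
have fvu : f v < f u.
  apply: (x_sigma_lt_lex (i0 := i1) (V_lattice_box uV) (V_lattice_box vV)).
    by move=> i; rewrite ai1; exact: agree.
  by rewrite mulrBr subr_gt0.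
by have := lt_le_trans fvu (v_max uV); rewrite ltxx.
Qed.

Lemma flag_step_conv_in t x :
  flag_step (conv V) sigma t x <-> conv_in V (agree_above v (n - t)) x.
Proof.
elim: t x => [|t IH] x /=.
  rewrite subn0 conv_in_True; apply: conv_in_eq => u; split=> // _ i.
  by have := abs_sigma_bounds i; lia.
rewrite (face_max_iff _ IH) (face_max_conv_in vV (fun i _ => erefl)).
  rewrite subnS; apply: conv_in_eq => u.
  by apply: iff_sym; exact: agree_above_pred.
by move=> u uV; exact: e_sinv_le_max.
Qed.

Lemma flag_bottom x : flagG (conv V) sigma 0 x <-> x = v.
Proof.
rewrite /flagG subn0 flag_step_conv_in subnn.
split=> [|->]; last exact: (conv_in_mem vV (fun i _ => erefl)).
apply: conv_in_single => u _ agree; apply/rowP => i; apply: agree.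
by case/andP: (abs_sigma_bounds i).
Qed.

Lemma conv_x_sigma_max_uniq z : conv V z -> f v <= f z -> z = v.
Proof.
move=> z_conv fvz.
have z_face : face_max (x_sigma sigma alpha) (conv_in V (fun=> True)) z.
  split=> [|y /conv_in_True y_conv]; first exact/conv_in_True.
  exact: le_trans (conv_dotv_le v_max y_conv) fvz.
move/(face_max_conv_in vV I (fun u uV _ => v_max uV)): z_face.
apply: conv_in_single => u uV [_ fuv].
exact: x_sigma_inj (V_lattice_box uV) (V_lattice_box vV) fuv.
Qed.

End Flag.

End LexicographicObjective.

Theorem mainTheorem10 (R : realFieldType) (n k : nat) (V : seq 'rV[R]_n)
  (sigma : 'I_n -> int) (alpha : R) :
  V != [::] ->
  (forall v, v \in V -> lattice_point v) ->
  (forall x, conv V x -> forall i, 0 <= x 0 i <= k%:R) ->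
  signed_perm sigma ->
  (2 * k + 1)%:R <= alpha ->
  exists v : 'rV[R]_n,
    [/\ is_vertex (conv V) v,
        (forall x, flagG (conv V) sigma 0 x <-> x = v),
        (forall y, conv V y -> dotv (x_sigma sigma alpha) y
                                 <= dotv (x_sigma sigma alpha) v)
      & (forall w, is_vertex (conv V) w -> w != v ->
           dotv (x_sigma sigma alpha) w < dotv (x_sigma sigma alpha) v)].
Proof.
move=> V_neq0 V_lat conv_box sigma_perm alpha_ge.
have alpha_ge' : k%:R + 1 <= alpha.
  by apply: le_trans alpha_ge; rewrite natr1 ler_nat; lia.
have V_lb u : u \in V -> lattice_point u /\ in_box k u.
  by move=> uV; split; [exact: V_lat | apply/conv_box/conv_in_True/conv_in_mem].
have [v vV v_max] := exists_argmax (dotv (x_sigma sigma alpha)) V_neq0.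
have f_le := conv_dotv_le v_max.
have f_uniq := conv_x_sigma_max_uniq sigma_perm alpha_ge' V_lb vV v_max.
exists v; split.
- apply: is_vertex_of_unique_max f_le f_uniq.
  exact/conv_in_True/conv_in_mem.
- by move=> x; exact: (flag_bottom sigma_perm alpha_ge' V_lb vV v_max x).
- exact: f_le.
- move=> w [w_conv _] w_neq; rewrite ltNge; apply: contra w_neq => fvw.
  by rewrite (f_uniq w).
Qed.
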